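(* Let $(V,L,\varphi,E)$ be a valuation system. Let $C$ be a sublattice of $V$ and $\psi:C\to E$ a valuation such that $\psi$ extends $\varphi$ and the valuation system $(V,C,\psi,E)$ is $\Pi$-complete. Then $\varphi$ is $\Pi$-extendible and $\psi$ extends $\Pi\varphi$.
   Context: A valuation system $(V,L,\varphi,E)$ consists of: (i) a lattice $V$ which is $\sigma$-distributive, i.e. for every $a\in V$ and every sequence $(b_n)$ in $V$ whose infimum exists, $\bigwedge_n(a\vee b_n)$ exists and equals $a\vee\bigwedge_n b_n$, and dually for suprema; (ii) a sublattice $L$ of $V$; (iii) a partially ordered abelian group $E$ which is R-complete: whenever $x_1\ge x_2\ge\cdots$ and $y_1\ge y_2\ge\cdots$ in $E$ are such that $\bigwedge_n(x_n+y_n)$ exists, then $\bigwedge_n x_n$ and $\bigwedge_n y_n$ exist, and dually for increasing sequences and suprema; (iv) a valuation $\varphi:L\to E$, i.e. an order-preserving map with $\varphi(a\wedge b)+\varphi(a\vee b)=\varphi(a)+\varphi(b)$. A map $\psi:C\to E$ extends $\varphi:L\to E$ if $L\subseteq C$ and $\psi|_L=\varphi$. A decreasing sequence $a_1\ge a_2\ge\cdots$ in $L$ is $\varphi$-convergent if $\bigwedge_n a_n$ exists in $V$ and $\bigwedge_n\varphi(a_n)$ exists in $E$. The system is $\Pi$-complete if for every $\varphi$-convergent decreasing sequence $(a_n)$ in $L$ we have $\bigwedge_n a_n\in L$ and $\varphi(\bigwedge_n a_n)=\bigwedge_n\varphi(a_n)$. Let $\Pi L:=\{\bigwedge_n a_n: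 (a_n)\text{ a }\varphi\text{-convergent decreasing sequence in }L\}$ (a sublattice of $V$). $\varphi$ is $\Pi$-extendible if there is a valuation $\Pi\varphi:\Pi L\to E$ with $\Pi\varphi(\bigwedge_n a_n)=\bigwedge_n\varphi(a_n)$ for every $\varphi$-convergent decreasing sequence $(a_n)$ in $L$. *)

From HB Require Import structures.
From mathcomp Require Import all_boot all_order all_algebra.
Set Implicit Arguments. Unset Strict Implicit. Unset Printing Implicit Defensive.
Import Order.Theory GRing.Theory.

Local Open Scope order_scope.

Section Bounds.
Context {d : Order.disp_t} {T : porderType d}.

Definition is_inf (a : nat -> T) (x : T) : Prop :=
  (forall n, x <= a n) /\ (forall y, (forall n, y <= a n) -> y <= x).
Definition is_sup (a : nat -> T) (x : T) : Prop :=
  (forall n, a n <= x) /\ (forall y, (forall n, a n <= y) -> x <= y).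

Definition has_inf (a : nat -> T) : Prop := exists x, is_inf a x.
Definition has_sup (a : nat -> T) : Prop := exists x, is_sup a x.

Definition decreasing_seq (a : nat -> T) : Prop := forall n, a n.+1 <= a n.
Definition increasing_seq (a : nat -> T) : Prop := forall n, a n <= a n.+1.
End Bounds.

Definition sigma_distributive {d : Order.disp_t} (V : latticeType d) : Prop :=
  (forall (a : V) (b : nat -> V) (m : V), is_inf b m ->
     is_inf (fun n => a `|` b n) (a `|` m)) /\
  (forall (a : V) (b : nat -> V) (m : V), is_sup b m ->
     is_sup (fun n => a `&` b n) (a `&` m)).

Definition sublattice {d : Order.disp_t} {V : latticeType d} (L : V -> Prop) : Prop :=
  forall a b, L a -> L b -> L (a `&` b) /\ L (a `|` b).

Definition po_group (E : porderZmodType) : Prop :=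
  forall x y z : E, x <= y -> (x + z)%R <= (y + z)%R.

Definition R_complete (E : porderZmodType) : Prop :=
  (forall x y : nat -> E, decreasing_seq x -> decreasing_seq y ->
     has_inf (fun n => (x n + y n)%R) -> has_inf x /\ has_inf y) /\
  (forall x y : nat -> E, increasing_seq x -> increasing_seq y ->
     has_sup (fun n => (x n + y n)%R) -> has_sup x /\ has_sup y).

(** * valuations [phi : L -> E]; phi is a total function whose values
    outside L are irrelevant *)
Definition valuation {d : Order.disp_t} {V : latticeType d} {E : porderZmodType}
  (L : V -> Prop) (phi : V -> E) : Prop :=
  (forall a b, L a -> L b -> a <= b -> phi a <= phi b) /\
  (forall a b, L a -> L b -> (phi (a `&` b) + phi (a `|` b))%R = (phi a + phi b)%R).

Definition valuation_system {d : Order.disp_t} (V : latticeType d) (L : V -> Prop)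
  (E : porderZmodType) (phi : V -> E) : Prop :=
  [/\ sigma_distributive V, sublattice L, po_group E, R_complete E & valuation L phi].

Definition extends {d : Order.disp_t} {V : latticeType d} {E : porderZmodType}
  (C : V -> Prop) (psi : V -> E) (L : V -> Prop) (phi : V -> E) : Prop :=
  (forall a, L a -> C a) /\ (forall a, L a -> psi a = phi a).

Definition phi_convergent {d : Order.disp_t} {V : latticeType d} {E : porderZmodType}
  (L : V -> Prop) (phi : V -> E) (a : nat -> V) : Prop :=
  [/\ forall n, L (a n), decreasing_seq a, has_inf a & has_inf (fun n => phi (a n))].

Definition Pi_complete {d : Order.disp_t} {V : latticeType d} {E : porderZmodType}
  (L : V -> Prop) (phi : V -> E) : Prop :=
  forall a : nat -> V, phi_convergent L phi a ->
    forall m, is_inf a m -> L m /\ is_inf (fun n => phi (a n)) (phi m).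

Definition PiL {d : Order.disp_t} {V : latticeType d} {E : porderZmodType}
  (L : V -> Prop) (phi : V -> E) (x : V) : Prop :=
  exists a : nat -> V, phi_convergent L phi a /\ is_inf a x.

Definition Pi_extension {d : Order.disp_t} {V : latticeType d} {E : porderZmodType}
  (L : V -> Prop) (phi : V -> E) (Piphi : V -> E) : Prop :=
  valuation (PiL L phi) Piphi /\
  (forall a : nat -> V, phi_convergent L phi a ->
     forall m, is_inf a m -> is_inf (fun n => phi (a n)) (Piphi m)).

Definition Pi_extendible {d : Order.disp_t} {V : latticeType d} {E : porderZmodType}
  (L : V -> Prop) (phi : V -> E) : Prop :=
  exists Piphi : V -> E, Pi_extension L phi Piphi.

From mathcomp Require Import all_boot all_order all_algebra.

Set Implicit Arguments.
Unset Strict Implicit.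

(* Every phi-convergent sequence of L is psi-convergent in C, so Pi-completeness
   of (V, C, psi, E) places Pi L inside C and gives psi (inf a_n) = inf phi (a_n).
   Hence psi itself, restricted to Pi L, is a Pi-extension of phi. *)

Lemma eq_is_inf (d : Order.disp_t) (T : porderType d) (f g : nat -> T) (x : T) :
  f =1 g -> is_inf f x -> is_inf g x.
Proof.
move=> eq_fg [lb_x glb_x]; split=> [n|y lb_y]; first by rewrite -eq_fg.
by apply: glb_x => n; rewrite eq_fg.
Qed.

Lemma eq_has_inf (d : Order.disp_t) (T : porderType d) (f g : nat -> T) :
  f =1 g -> has_inf f -> has_inf g.
Proof. by move=> eq_fg [x inf_x]; exists x; apply: eq_is_inf inf_x. Qed.

Lemma sub_valuation (d : Order.disp_t) (V : latticeType d) (E : porderZmodType)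
    (L C : V -> Prop) (psi : V -> E) :
  (forall a, L a -> C a) -> valuation C psi -> valuation L psi.
Proof.
move=> sub_LC [psi_mono psi_modular]; split=> a b /sub_LC Ca /sub_LC Cb.
- exact: psi_mono.
- exact: psi_modular.
Qed.

Section PiExtension.
Variables (d : Order.disp_t) (V : latticeType d) (E : porderZmodType).
Variables (L C : V -> Prop) (phi psi : V -> E).
Hypothesis psi_ext : extends C psi L phi.

Lemma extends_phi_convergent {a : nat -> V} :
  phi_convergent L phi a -> phi_convergent C psi a.
Proof.
case: psi_ext => sub_LC eq_psi [La a_decr inf_a inf_phi_a]; split=> //.
- by move=> n; apply: sub_LC.
- by apply: eq_has_inf inf_phi_a => n; rewrite eq_psi.
Qed.

Hypothesis psi_Pi_complete : Pi_complete C psi.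

Lemma PiL_sub (x : V) : PiL L phi x -> C x.
Proof.
move=> [a [conv_a inf_a]].
by case: (psi_Pi_complete (extends_phi_convergent conv_a) inf_a).
Qed.

Lemma Pi_complete_is_inf (a : nat -> V) :
  phi_convergent L phi a ->
  forall m, is_inf a m -> is_inf (fun n => phi (a n)) (psi m).
Proof.
move=> conv_a m inf_a; case: psi_ext => _ eq_psi.
have [_ inf_psi_a] := psi_Pi_complete (extends_phi_convergent conv_a) inf_a.
by apply: eq_is_inf inf_psi_a => n; case: conv_a => La _ _ _; rewrite eq_psi.
Qed.

Lemma Pi_complete_Pi_extension :
  valuation C psi -> Pi_extension L phi psi.
Proof.
move=> psi_val; split; last exact: Pi_complete_is_inf.
exact: sub_valuation PiL_sub psi_val.
Qed.

End PiExtension.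

Theorem lemma5p5 (d : Order.disp_t) (V : latticeType d) (E : porderZmodType)
  (L : V -> Prop) (phi : V -> E) (C : V -> Prop) (psi : V -> E) :
  valuation_system L phi ->
  sublattice C -> valuation C psi -> extends C psi L phi ->
  Pi_complete C psi ->
  exists Piphi : V -> E,
    Pi_extension L phi Piphi /\ extends C psi (PiL L phi) Piphi.
Proof.
move=> _ _ psi_val psi_ext psi_Pi_complete; exists psi; split.
- exact: Pi_complete_Pi_extension psi_ext psi_Pi_complete psi_val.
- split=> //; exact: PiL_sub psi_ext psi_Pi_complete.
Qed.
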